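(* Let $D$ be a non-commutative division ring with center $F$ and let $M$ be an irreducible locally solvable maximal subgroup of $D^*$. If $M$ is metabelian, then: (i) $M$ contains a unique maximal abelian normal subgroup $A$, and it satisfies $F^*\subsetneq A$ and $M'\le A$; (ii) $K=A\cup\{0\}$ is a maximal subfield of $D$.
   Context: $D^*$ is the multiplicative group of $D$; maximal subgroup = proper subgroup maximal among proper subgroups. A subgroup $G\le D^*$ is irreducible if the division subring $F(G)$ generated by $F\cup G$ equals $D$. Locally solvable: every finitely generated subgroup solvable. Metabelian: the derived subgroup $M'$ is abelian. A maximal abelian normal subgroup is an abelian normal subgroup not properly contained in another abelian normal subgroup. *)

(* A division ring D is modelled as a unitRingType (nontrivial
   ring with computable inverses) in which every nonzero element is a unit.
   Subsets of D (possibly infinite) are predicates D -> Prop. *)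
From mathcomp Require Import all_boot all_algebra.
Set Implicit Arguments. Unset Strict Implicit. Unset Printing Implicit Defensive.
Import GRing.Theory.
Local Open Scope ring_scope.

Section Defs.
Variable D : unitRingType.

Definition is_division_ring : Prop := forall x : D, x != 0 -> x \is a GRing.unit.

Definition dsubset (A B : D -> Prop) : Prop := forall x, A x -> B x.
Definition seteq (A B : D -> Prop) : Prop := forall x, A x <-> B x.

Definition center : D -> Prop := fun x => forall y, x * y = y * x.
Definition units_set : D -> Prop := fun x => x != 0.
Definition center_units : D -> Prop := fun x => center x /\ x != 0.

Definition is_subgroup (G : D -> Prop) : Prop :=
  [/\ G 1, (forall x, G x -> x != 0),
      (forall x y, G x -> G y -> G (x * y)) & (forall x, G x -> G x^-1)].

Definition gen_subgroup (S : D -> Prop) : D -> Prop :=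
  fun x => forall H, is_subgroup H -> dsubset S H -> H x.

Definition commutator (x y : D) : D := x^-1 * y^-1 * x * y.

Definition derived_subgroup (G : D -> Prop) : D -> Prop :=
  gen_subgroup (fun z => exists x y, [/\ G x, G y & z = commutator x y]).

Definition derived_series (G : D -> Prop) (n : nat) : D -> Prop :=
  iter n derived_subgroup G.

Definition solvable_grp (G : D -> Prop) : Prop :=
  exists n, dsubset (derived_series G n) (fun x => x = 1).

Definition locally_solvable (G : D -> Prop) : Prop :=
  forall s : seq D, (forall x, x \in s -> G x) ->
    solvable_grp (gen_subgroup (fun x => x \in s)).

Definition abelian_set (G : D -> Prop) : Prop :=
  forall x y, G x -> G y -> x * y = y * x.

Definition metabelian (M : D -> Prop) : Prop := abelian_set (derived_subgroup M).

Definition normal_sub (N M : D -> Prop) : Prop :=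
  [/\ is_subgroup N, dsubset N M & forall x m, N x -> M m -> N (m^-1 * x * m)].

Definition maximal_subgroup (M : D -> Prop) : Prop :=
  [/\ is_subgroup M, (exists x, x != 0 /\ ~ M x) &
      forall H, is_subgroup H -> dsubset M H -> seteq H M \/ seteq H units_set].

Definition is_division_subring (S : D -> Prop) : Prop :=
  [/\ S 0, S 1, (forall x y, S x -> S y -> S (x - y)),
      (forall x y, S x -> S y -> S (x * y)) &
      (forall x, S x -> x != 0 -> S x^-1)].

Definition division_subring_gen (S : D -> Prop) : D -> Prop :=
  fun x => forall T, is_division_subring T -> dsubset S T -> T x.

Definition irreducible_sub (G : D -> Prop) : Prop :=
  seteq (division_subring_gen (fun x => center x \/ G x)) (fun _ => True).

Definition is_subfield (K : D -> Prop) : Prop :=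
  is_division_subring K /\ (forall x y, K x -> K y -> x * y = y * x).

Definition maximal_subfield (K : D -> Prop) : Prop :=
  is_subfield K /\ forall L, is_subfield L -> dsubset K L -> seteq L K.

Definition max_abelian_normal (A M : D -> Prop) : Prop :=
  [/\ normal_sub A M, abelian_set A &
      forall B, normal_sub B M -> abelian_set B -> dsubset A B -> seteq B A].

End Defs.

(* Choose x in M, not central, centralizing M' (possible by irreducibility,
   since M' is abelian).  The division ring L = F(M', x) is a field normalized
   by M, because m^-1 x m = x [x, m].  Its centralizer C is an M-invariant
   division ring, so C^* M is a subgroup containing M: by maximality either
   C^* <= M, or C is normalized by all of D^* and Cartan-Brauer-Hua forces
   C = D or C <= F, both impossible as x lies in C but not in F.
   Hua's trick -- if s and its conjugates by c and 1 + c lie in a division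
   ring S, then c lies in S or commutes with s -- then shows that C is
   commutative (the commutators of C^* lie in M' <= L) and that every abelian
   normal subgroup of M commutes with C, hence lies in A = C^*.  So A is the
   unique maximal abelian normal subgroup of M, and C = A u {0}, being the
   centralizer of its subfield L, is a maximal subfield. *)

From mathcomp Require Import all_boot all_algebra.
From Stdlib Require Import Classical.
Import GRing.Theory.
Set Implicit Arguments. Unset Strict Implicit. Unset Printing Implicit Defensive.
Local Open Scope ring_scope.

Section Conjugation.
Variable R : unitRingType.
Implicit Types m a b : R.

Lemma invr_conj m a : m \is a GRing.unit -> (m^-1 * a * m)^-1 = m^-1 * a^-1 * m.
Proof.
move=> um; have [ua | nua] := boolP (a \is a GRing.unit).
  by rewrite invrM ?unitrMr ?unitrV // invrM ?unitrV // invrK mulrA.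
by rewrite [in RHS](invr_out nua) invr_out // unitrMl // unitrMr ?unitrV.
Qed.

Lemma mulr_conj m a b : m \is a GRing.unit ->
  m^-1 * (a * b) * m = (m^-1 * a * m) * (m^-1 * b * m).
Proof. by move=> um; rewrite !mulrA mulrK. Qed.

Lemma commutator_conj m a b : m \is a GRing.unit ->
  m^-1 * commutator a b * m = commutator (m^-1 * a * m) (m^-1 * b * m).
Proof. by move=> um; rewrite /commutator !invr_conj // !mulrA !mulrK. Qed.

Lemma conj_eq_mul_commutator m a : a \is a GRing.unit ->
  m^-1 * a * m = a * commutator a m.
Proof. by move=> ua; rewrite /commutator !mulrA mulrV // mul1r. Qed.

End Conjugation.

Section DivisionRing.
Variables (D : unitRingType) (hdiv : is_division_ring D).
Implicit Types (a b c m x y : D) (S T E K : D -> Prop).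

Lemma divring_unitE x : (x \is a GRing.unit) = (x != 0).
Proof.
apply/idP/idP => [ux | /hdiv //].
by apply: contraTneq ux => ->; rewrite unitr0.
Qed.

Lemma divring_mulf_neq0 x y : x != 0 -> y != 0 -> x * y != 0.
Proof. by rewrite -!divring_unitE => ux uy; rewrite unitrMl. Qed.

Lemma divring_conj_neq0 m x : m != 0 -> x != 0 -> m^-1 * x * m != 0.
Proof. by move=> m0 x0; rewrite !divring_mulf_neq0 // invr_eq0. Qed.

Lemma conj0r m : m^-1 * 0 * m = 0.
Proof. by rewrite mulr0 mul0r. Qed.

Lemma conjr0 x : 0^-1 * x * 0 = 0.
Proof. by rewrite mulr0. Qed.

Lemma conj_division_subring E m : m != 0 -> is_division_subring E ->
  is_division_subring (fun e => E (m^-1 * e * m)).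
Proof.
rewrite -divring_unitE => um [E0 E1 EB EM EV]; split.
- by rewrite conj0r.
- by rewrite mulr1 mulVr.
- by move=> a b ha hb; rewrite mulrBr mulrBl; apply: EB.
- by move=> a b ha hb; rewrite mulr_conj //; apply: EM.
- move=> a ha a0; rewrite -invr_conj //; apply: EV => //.
  by rewrite divring_conj_neq0 // -divring_unitE.
Qed.

Definition centralizer T : D -> Prop := fun z => forall t, T t -> z * t = t * z.

Lemma centralizer_division_subring T : is_division_subring (centralizer T).
Proof.
split=> [t _ | t _ | a b ha hb t ht | a b ha hb t ht | a ha a0 t ht].
- by rewrite mul0r mulr0.
- by rewrite mul1r mulr1.
- by rewrite mulrBl mulrBr ha // hb.
- by rewrite -mulrA hb // !mulrA ha.
- have ua := hdiv a0.
  by rewrite -[LHS]mulr1 -(mulrV ua) mulrA -(mulrA a^-1) -ha // mulrA mulVr // mul1r.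
Qed.

Lemma centralizer_add1 T a : centralizer T a -> centralizer T (1 + a).
Proof. by move=> ha t ht; rewrite mulrDl mulrDr mul1r mulr1 ha. Qed.

Lemma abelian_sub_centralizer S : abelian_set S -> dsubset S (centralizer S).
Proof. by move=> hS a ha t; apply: hS. Qed.

(* Hua's identity [s - s2 = c (s2 - s1)], where [s1], [s2] are the conjugates
   of [s] by [c] and [1 + c], expresses [c] through elements of [S]. *)
Lemma hua_conj_pair S s c : is_division_subring S -> S s ->
  S (c^-1 * s * c) -> S ((1 + c)^-1 * s * (1 + c)) -> S c \/ s * c = c * s.
Proof.
move=> [S0 S1 SB SM SV] Ss Ss1 Ss2.
have [-> | c0] := eqVneq c 0; first by left.
have [c1_0 | c1_0] := eqVneq (1 + c) 0.
  left; have -> : c = 0 - 1 by rewrite -c1_0 [1 + c]addrC addrK.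
  exact: SB.
set s1 := c^-1 * s * c in Ss1; set s2 := (1 + c)^-1 * s * (1 + c) in Ss2.
have e1 : s * c = c * s1 by rewrite /s1 !mulrA mulrV ?divring_unitE // mul1r.
have e2 : s * (1 + c) = (1 + c) * s2 by rewrite /s2 !mulrA mulrV ?divring_unitE // mul1r.
have hua : s - s2 = c * (s2 - s1).
  move: e2; rewrite mulrDr mulrDl mulr1 mul1r e1 => e2.
  by rewrite mulrBr -[s - s2](addrK (c * s1)) (addrAC s) e2 [s2 + _]addrC addrK.
have [e12 | n12] := eqVneq s2 s1.
  right; move/eqP: hua; rewrite e12 subrr mulr0 subr_eq0 => /eqP ss2.
  by rewrite e1 -ss2.
left; have -> : c = (s - s2) * (s2 - s1)^-1 by rewrite hua mulrK // divring_unitE subr_eq0.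
by apply: SM; [apply: SB | apply: SV; rewrite ?subr_eq0 //; apply: SB].
Qed.

Lemma cartan_brauer_hua E : is_division_subring E ->
  (forall y e, y != 0 -> E e -> E (y^-1 * e * y)) ->
  (forall d, E d) \/ dsubset E (@center D).
Proof.
move=> sE nE; have [E0 _ EB _ _] := sE.
have {}nE y e : E e -> E (y^-1 * e * y).
  by have [-> _ | y0] := eqVneq y 0; [rewrite conjr0 | exact: nE].
have [[b nb] | /not_ex_all_not Eall] := classic (exists b, ~ E b); last first.
  by left=> d; apply: NNPP; apply: Eall.
have outside_comm e c : E e -> ~ E c -> e * c = c * e.
  by move=> he hc; case: (hua_conj_pair sE he (nE c e he) (nE (1 + c) e he)).
right=> e he y; have [hy | hy] := classic (E y); last exact: outside_comm.
have nby : ~ E (b + y) by move=> hby; apply: nb; rewrite -(addrK y b); apply: EB.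
have := outside_comm e _ he nby.
by rewrite mulrDr mulrDl (outside_comm e b he nb) => /addrI.
Qed.

Lemma division_subring_gen_subring S : is_division_subring (division_subring_gen S).
Proof.
split=> [T [] // | T [] // | a b ha hb T hT hS | a b ha hb T hT hS | a ha a0 T hT hS];
  have [_ _ TB TM TV] := hT.
- by apply: TB; [apply: ha | apply: hb].
- by apply: TM; [apply: ha | apply: hb].
- by apply: TV => //; apply: ha.
Qed.

Lemma division_subring_gen_incl S : dsubset S (division_subring_gen S).
Proof. by move=> x hx T _; apply. Qed.

Lemma division_subring_gen_comm S : abelian_set S ->
  abelian_set (division_subring_gen S).
Proof.
move=> hS a b ha hb.
have ca : centralizer S a.
  by apply: ha; [exact: centralizer_division_subring | move=> s hs t; apply: hS].
have cb : centralizer (fun t => t = a) b.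
  apply: hb; first exact: centralizer_division_subring.
  by move=> s hs t ->; rewrite (ca s hs).
by rewrite (cb a).
Qed.

Lemma division_subring_gen_conj S m : m != 0 ->
  (forall s, S s -> division_subring_gen S (m^-1 * s * m)) ->
  forall l, division_subring_gen S l -> division_subring_gen S (m^-1 * l * m).
Proof.
move=> m0 hS l hl; apply: (hl (fun e => division_subring_gen S (m^-1 * e * m))) => //.
exact/conj_division_subring/division_subring_gen_subring.
Qed.

Definition units_of S : D -> Prop := fun z => S z /\ z != 0.

Lemma units_of_subgroup S : is_division_subring S -> is_subgroup (units_of S).
Proof.
move=> [_ S1 _ SM SV]; split=> [| y [] // | a b [ha a0] [hb b0] | a [ha a0]].
- by split; rewrite ?oner_neq0.
- by split; [apply: SM | apply: divring_mulf_neq0].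
- by split; [apply: SV | rewrite invr_eq0].
Qed.

Lemma units_of_or0 S z : S 0 -> (units_of S z \/ z = 0) <-> S z.
Proof.
move=> S0; split=> [[[] // | -> //] | hz].
by have [-> | z0] := eqVneq z 0; [right | left].
Qed.

Lemma maximal_subfield_seteq K K' : seteq K K' ->
  maximal_subfield K -> maximal_subfield K'.
Proof.
move=> eK [[[K0 K1 KB KM KV] Kab] Kmax]; split; first split; first split.
- exact/eK.
- exact/eK.
- by move=> a b /eK ha /eK hb; apply/eK/KB.
- by move=> a b /eK ha /eK hb; apply/eK/KM.
- by move=> a /eK ha a0; apply/eK/KV.
- by move=> a b /eK ha /eK hb; apply: Kab.
- move=> L2 hL2 hK'L2; have hKL2 : dsubset K L2 by move=> z /eK /hK'L2.
  by move=> y; split=> [/(Kmax L2 hL2 hKL2 y) /eK | /hK'L2].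
Qed.

End DivisionRing.

Section Subgroups.
Variables (D : unitRingType) (hdiv : is_division_ring D).
Implicit Types (C H M : D -> Prop) (a b c m x y : D).

Lemma subgroup_unit H m : is_subgroup H -> H m -> m \is a GRing.unit.
Proof. by move=> [_ Hnz _ _] /Hnz; rewrite divring_unitE. Qed.

Lemma subgroup_conj H m x : is_subgroup H -> H m -> H x -> H (m^-1 * x * m).
Proof. by move=> [_ _ HM HV] hm hx; apply: HM (HM _ _ (HV _ hm) hx) hm. Qed.

Lemma conj_subgroup H m : m != 0 -> is_subgroup H ->
  is_subgroup (fun y => H (m^-1 * y * m)).
Proof.
rewrite -(divring_unitE hdiv) => um [H1 Hnz HM HV]; split.
- by rewrite mulr1 mulVr.
- by move=> y hy; apply: contraTneq (Hnz _ hy) => ->; rewrite conj0r eqxx.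
- by move=> a b ha hb; rewrite mulr_conj //; apply: HM.
- by move=> a ha; rewrite -invr_conj //; apply: HV.
Qed.

Lemma derived_subgroup_commutator M a b : M a -> M b ->
  derived_subgroup M (commutator a b).
Proof. by move=> ha hb H _; apply; exists a, b. Qed.

Lemma derived_subgroup_sub M : is_subgroup M -> dsubset (derived_subgroup M) M.
Proof.
move=> hM z; apply => // _ [a [b [ha hb ->]]].
have [_ _ MM MV] := hM.
by rewrite /commutator; do 3![apply: (MM) => //]; apply: MV.
Qed.

Lemma derived_subgroup_conj M m z : is_subgroup M -> M m ->
  derived_subgroup M z -> derived_subgroup M (m^-1 * z * m).
Proof.
move=> hM hm hz H hH hc; have um := subgroup_unit hM hm.
apply: (hz (fun y => H (m^-1 * y * m))).
  by apply: conj_subgroup => //; rewrite -(divring_unitE hdiv).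
move=> _ [a [b [ha hb ->]]]; rewrite commutator_conj //.
by apply: hc; exists (m^-1 * a * m), (m^-1 * b * m); split=> //; apply: subgroup_conj.
Qed.

Definition mulset_units C M : D -> Prop :=
  fun y => exists c m, [/\ C c, c != 0, M m & y = c * m].

Lemma mulset_units_subgroup C M : is_division_subring C -> is_subgroup M ->
  (forall m c, M m -> C c -> C (m^-1 * c * m)) -> is_subgroup (mulset_units C M).
Proof.
move=> [_ C1 _ CM CV] hM nC; have [M1 Mnz MM MV] := hM.
have Mu := subgroup_unit hM.
have nCV m c : M m -> C c -> C (m * c * m^-1).
  by move=> hm hc; rewrite -[m in m * c](invrK m); apply: nC => //; apply: MV.
split.
- by exists 1, 1; rewrite mulr1 oner_neq0.
- by move=> _ [c [m [_ c0 hm ->]]]; rewrite divring_mulf_neq0 // Mnz.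
- move=> _ _ [c [m [hc c0 hm ->]]] [c' [m' [hc' c0' hm' ->]]].
  exists (c * (m * c' * m^-1)), (m * m'); split; first by apply: CM => //; apply: nCV.
  + rewrite divring_mulf_neq0 // -[m in m * c'](invrK m) divring_conj_neq0 //.
    by rewrite invr_eq0 Mnz.
  + by apply: MM.
  + by rewrite !mulrA mulrVK ?Mu.
- move=> _ [c [m [hc c0 hm ->]]].
  exists (m^-1 * c^-1 * m), m^-1; split; first by apply: nC => //; apply: CV.
  + by rewrite divring_conj_neq0 ?invr_eq0 // Mnz.
  + exact: MV.
  + have um := Mu _ hm; have uc : c \is a GRing.unit by rewrite (divring_unitE hdiv).
    by rewrite invrM // mulrK.
Qed.

Lemma normalized_subring_units_sub M C : maximal_subgroup M ->
  is_division_subring C -> (forall m c, M m -> C c -> C (m^-1 * c * m)) ->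
  ~ (forall d, C d) -> (exists c, C c /\ ~ center c) -> dsubset (units_of C) M.
Proof.
move=> [hM _ Mmax] sC nC nCall [x [Cx nFx]] c [hc c0].
have [_ C1 _ CM CV] := sC.
have HM : dsubset M (mulset_units C M) by move=> m hm; exists 1, m; rewrite mul1r oner_neq0.
have [HeqM | HeqD] := Mmax _ (mulset_units_subgroup sC hM nC) HM.
  by apply/HeqM; exists c, 1; rewrite mulr1; split=> //; case: hM.
have nCD y e : y != 0 -> C e -> C (y^-1 * e * y).
  move=> y0 he; have [c' [m [hc' c0' hm ->]]] := proj2 (HeqD y) y0.
  have um := subgroup_unit hM hm.
  have -> : (c' * m)^-1 * e * (c' * m) = m^-1 * (c'^-1 * e * c') * m.
    by rewrite invrM // ?(divring_unitE hdiv) // !mulrA.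
  by apply: nC => //; apply: (CM) => //; apply: (CM) => //; apply: CV.
have [Call | Ccent] := cartan_brauer_hua hdiv sC nCD.
  by case: nCall.
by case: nFx; apply: Ccent.
Qed.

Lemma centralizer_conj L M m c : is_subgroup M ->
  (forall m l, M m -> L l -> L (m^-1 * l * m)) ->
  M m -> centralizer L c -> centralizer L (m^-1 * c * m).
Proof.
move=> hM nL hm hc t ht; have [_ _ _ MV] := hM; have um := subgroup_unit hM hm.
set t' := m * t * m^-1.
have ht' : L t' by rewrite /t' -[m in m * t](invrK m); apply: nL => //; apply: MV.
have -> : t = m^-1 * t' * m by rewrite /t' !mulrA mulVr // mul1r mulrVK.
by rewrite -!mulr_conj // hc.
Qed.

Lemma commute_of_centralizer_derived M a b : is_subgroup M -> M a ->
  (M b \/ b = 0) -> (M (1 + b) \/ 1 + b = 0) ->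
  centralizer (derived_subgroup M) a -> a * b = b * a.
Proof.
move=> hM ha hb hb1 ca; have sS := centralizer_division_subring hdiv (fun t => t = a).
have ua := subgroup_unit hM ha.
have conj_a m : M m \/ m = 0 -> centralizer (fun t => t = a) (m^-1 * a * m).
  case=> [hm t -> | -> t ->]; last by rewrite conjr0 mul0r mulr0.
  rewrite conj_eq_mul_commutator // -mulrA -ca ?mulrA //.
  exact: derived_subgroup_commutator.
have Sa : centralizer (fun t => t = a) a by move=> t ->.
have [cb | //] := hua_conj_pair hdiv sS Sa (conj_a _ hb) (conj_a _ hb1).
exact/esym/cb.
Qed.

Lemma normal_abelian_commute B M a b : normal_sub B M -> abelian_set B ->
  (M a \/ a = 0) -> (M (1 + a) \/ 1 + a = 0) -> B b -> a * b = b * a.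
Proof.
move=> [_ _ Bconj] Bab ha ha1 hb; have sS := centralizer_division_subring hdiv B.
have conj_b m : M m \/ m = 0 -> centralizer B (m^-1 * b * m).
  case=> [hm | ->]; last by rewrite conjr0 => t _; rewrite mul0r mulr0.
  by move=> t; apply: Bab; apply: Bconj.
have [ca | //] := hua_conj_pair hdiv sS (fun t => Bab b t hb) (conj_b _ ha) (conj_b _ ha1).
exact: ca.
Qed.

End Subgroups.

Section InvariantSubfield.
Variables (D : unitRingType) (hdiv : is_division_ring D) (M L : D -> Prop).
Hypotheses (hmax : maximal_subgroup M) (Lab : abelian_set L).
Hypotheses (LMd : dsubset (derived_subgroup M) L)
  (nL : forall m l, M m -> L l -> L (m^-1 * l * m)) (Lnc : exists x, L x /\ ~ center x).

Let hM : is_subgroup M. Proof. by case: hmax. Qed.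

Lemma units_centralizer_sub : dsubset (units_of (centralizer L)) M.
Proof.
have [x [Lx nFx]] := Lnc.
apply: (normalized_subring_units_sub hdiv hmax (centralizer_division_subring hdiv L)).
- move=> m c hm hc; exact (centralizer_conj hdiv hM nL hm hc).
- by move=> Call; case: nFx => y; rewrite (Call y x Lx).
- by exists x; split=> //; apply: abelian_sub_centralizer.
Qed.

Lemma centralizer_units_or0 c : centralizer L c -> M c \/ c = 0.
Proof. by have [-> | c0] := eqVneq c 0; [right | left; apply: units_centralizer_sub]. Qed.

Lemma centralizer_abelian : abelian_set (centralizer L).
Proof.
move=> a b ha hb; have [Ma | ->] := centralizer_units_or0 ha; last by rewrite mul0r mulr0.
apply: (commute_of_centralizer_derived hdiv hM Ma (centralizer_units_or0 hb)).
  exact/centralizer_units_or0/centralizer_add1.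
by move=> z hz; apply: ha; apply: LMd.
Qed.

Lemma units_centralizer_normal : normal_sub (units_of (centralizer L)) M.
Proof.
split; first exact/units_of_subgroup/centralizer_division_subring.
  exact: units_centralizer_sub.
move=> c m [hc c0] hm; split; first exact (centralizer_conj hdiv hM nL hm hc).
by rewrite divring_conj_neq0 // -(divring_unitE hdiv) (subgroup_unit hdiv hM hm).
Qed.

Lemma units_centralizer_abelian : abelian_set (units_of (centralizer L)).
Proof. by move=> a b [ha _] [hb _]; apply: centralizer_abelian. Qed.

Lemma units_centralizer_max_abelian_normal :
  max_abelian_normal (units_of (centralizer L)) M.
Proof.
split; [exact: units_centralizer_normal | exact: units_centralizer_abelian |].
move=> B [[_ Bnz _ _] _ _] Bab hAB y; split=> [hy | /hAB //]; split; last exact: Bnz.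
move=> t ht; have [-> | t0] := eqVneq t 0; first by rewrite mul0r mulr0.
by apply: Bab => //; apply: hAB; split=> //; apply: abelian_sub_centralizer.
Qed.

Lemma max_abelian_normal_eq_units B : max_abelian_normal B M ->
  seteq B (units_of (centralizer L)).
Proof.
move=> [nB Bab Bmax].
suff hBA : dsubset B (units_of (centralizer L)).
  move=> y; split=> [/hBA // | hy].
  by apply/(Bmax _ units_centralizer_normal units_centralizer_abelian hBA y).
move=> b hb; split; last by case: nB => [[_ Bnz _ _] _ _]; apply: Bnz.
move=> t ht; apply/esym/(normal_abelian_commute hdiv nB Bab _ _ hb).
  exact/centralizer_units_or0/abelian_sub_centralizer.
exact/centralizer_units_or0/centralizer_add1/abelian_sub_centralizer.
Qed.

Lemma centralizer_maximal_subfield : maximal_subfield (centralizer L).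
Proof.
split; first by split; [exact: centralizer_division_subring | exact: centralizer_abelian].
move=> K [_ Kab] hCK y; split=> [hy t ht | /hCK //].
by apply: Kab => //; apply/hCK/abelian_sub_centralizer.
Qed.

End InvariantSubfield.

Section DerivedAdjoin.
Variables (D : unitRingType) (hdiv : is_division_ring D).
Implicit Types (M : D -> Prop) (m x : D).

Definition derived_adjoin M x : D -> Prop :=
  division_subring_gen (fun z => center z \/ derived_subgroup M z \/ z = x).

Lemma derived_adjoin_abelian M x : metabelian M ->
  centralizer (derived_subgroup M) x -> abelian_set (derived_adjoin M x).
Proof.
move=> hmeta xc; apply: division_subring_gen_comm => // a b.
case=> [ca | [ha | ->]] [cb | [hb | ->]] //; rewrite ?ca -?cb //.
- exact: hmeta.
- exact/esym/xc.
- exact: xc.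
Qed.

Lemma derived_adjoin_conj M x m l : is_subgroup M -> M x -> M m ->
  derived_adjoin M x l -> derived_adjoin M x (m^-1 * l * m).
Proof.
move=> hM hx hm; have [_ Mnz _ _] := hM; have um := subgroup_unit hdiv hM hm.
have [_ _ _ LM _] := division_subring_gen_subring
  (fun z => center z \/ derived_subgroup M z \/ z = x).
apply: (division_subring_gen_conj hdiv); first exact: Mnz.
move=> z [cz | [hz | ->]].
- by apply: division_subring_gen_incl; left; rewrite -mulrA cz mulrA mulVr ?mul1r.
- by apply: division_subring_gen_incl; right; left; apply: derived_subgroup_conj.
rewrite conj_eq_mul_commutator ?(subgroup_unit hdiv hM) //.
by apply: LM; apply: division_subring_gen_incl; [right; right | right; left;
  apply: derived_subgroup_commutator].
Qed.

Lemma exists_noncentral_centralizing_derived M : is_subgroup M ->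
  (exists a b : D, a * b != b * a) -> irreducible_sub M -> metabelian M ->
  exists x, [/\ M x, ~ center x & centralizer (derived_subgroup M) x].
Proof.
move=> hM [a [b nab]] hirr hmeta.
have [[z [hz nFz]] | Md_central] := classic (exists z, derived_subgroup M z /\ ~ center z).
  exists z; split=> //; first exact: derived_subgroup_sub.
  by move=> t ht; apply: hmeta.
have [[x [hx nFx]] | M_central] := classic (exists x, M x /\ ~ center x).
  exists x; split=> // z hz.
  have cz : center z by apply: NNPP => nFz; apply: Md_central; exists z.
  by rewrite cz.
have M_center : dsubset M (@center D).
  by move=> y hy; apply: NNPP => nFy; apply: M_central; exists y.
case/eqP: nab.
apply: (division_subring_gen_comm hdiv _ (proj2 (hirr a) I) (proj2 (hirr b) I)).
by move=> u v [cu | /M_center cu] _; rewrite cu.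
Qed.

End DerivedAdjoin.

Theorem theorem2p3 (D : unitRingType) (hdiv : is_division_ring D)
    (hnc : exists x y : D, x * y != y * x)
    (M : D -> Prop) (hmax : maximal_subgroup M) (hirr : irreducible_sub M)
    (hls : locally_solvable M) (hmeta : metabelian M) :
  exists A : D -> Prop,
    [/\ max_abelian_normal A M,
        (forall B, max_abelian_normal B M -> seteq B A),
        dsubset (center_units (D:=D)) A /\ (exists a, A a /\ ~ center a),
        dsubset (derived_subgroup M) A &
        maximal_subfield (fun x => A x \/ x = 0)].
Proof.
have [hM _ _] := hmax; have [_ Mnz _ _] := hM.
have [x [Mx nFx xc]] := exists_noncentral_centralizing_derived hdiv hM hnc hirr hmeta.
set L := derived_adjoin M x.
have Lx : L x by apply: division_subring_gen_incl; right; right.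
have LMd : dsubset (derived_subgroup M) L.
  by move=> z hz; apply: division_subring_gen_incl; right; left.
have Lab : abelian_set L := derived_adjoin_abelian hdiv hmeta xc.
have nL m l : M m -> L l -> L (m^-1 * l * m) := derived_adjoin_conj hdiv hM Mx.
have Lnc : exists x, L x /\ ~ center x by exists x.
exists (units_of (centralizer L)); split.
- exact: units_centralizer_max_abelian_normal.
- exact: max_abelian_normal_eq_units.
- split; first by move=> z [cz z0]; split=> // t _; apply: cz.
  by exists x; split=> //; split; [apply: abelian_sub_centralizer | apply: Mnz].
- move=> z hz; split; first exact: abelian_sub_centralizer Lab _ (LMd _ hz).
  exact/Mnz/(derived_subgroup_sub hM).
- apply: maximal_subfield_seteq (centralizer_maximal_subfield hdiv hmax Lab LMd nL Lnc).
  move=> z; apply: iff_sym; apply: units_of_or0.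
  by case: (centralizer_division_subring hdiv L).
Qed.
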